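(* Let $m\in[0,1]$, $n=\sqrt{1-m^2}$, and for $k\in[-\pi,\pi]$ define $\omega=\arccos(n\cos k)\in[0,\pi]$, $\omega_{\rm D}=\sqrt{k^2+m^2}$, $v=\frac{n\sin k}{\sin\omega}$, $v_{\rm D}=\frac{k}{\sqrt{k^2+m^2}}$, $$\alpha(k,m)=\omega_{\rm D}-\omega,\qquad \beta(k,m)=1-v\,v_{\rm D}-\sqrt{(1-v^2)(1-v_{\rm D}^2)},$$ $$H(k)=\frac{\omega}{\sin\omega}\begin{pmatrix}-n\sin k & m\\ m & n\sin k\end{pmatrix},\qquad H_{\rm D}(k)=\begin{pmatrix}-k & m\\ m & k\end{pmatrix},$$ $V(k,t)=e^{-iH_{\rm D}(k)t}\,\big(e^{-iH(k)t}\big)^\dagger$, and let $\mu(k,m,t)\in[0,\pi]$ be such that the eigenvalues of the $SU(2)$ matrix $V(k,t)$ are $e^{\pm i\mu(k,m,t)}$. Let $0\le\bar k<\pi$, let $N$ be a positive integer, and put $$\bar\alpha=\max_{k\in[-\bar k,\bar k]}|\alpha(k,m)|,\qquad \bar\beta=\max_{k\in[-\bar k,\bar k]}|\beta(k,m)|,\qquad f(\bar k,m,N)=\frac{\arccos\!\big(\cos(\tfrac{\pi}{2N})+\bar\beta\big)}{\bar\alpha}.$$ If $\bar\beta\le 1-\cos(\tfrac{\pi}{2N})$ and $0\le t\le f(\bar k,m,N)$, then for every $k\in[-\bar k,\bar k]$ $$N\,\mu(k,m,t)\ \le\ g(\bar k,m,N,t)\ \le\ \frac{\pi}{2},\qquad\text{where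 } g(\bar k,m,N,t):=N\arccos\!\big(\cos(\bar\alpha t)-\bar\beta\big).$$
   Context: $H(k)$ is the momentum-space effective Hamiltonian of the one-dimensional Dirac quantum cellular automaton with mass parameter $m$, and $H_{\rm D}(k)$ the one-dimensional Dirac Hamiltonian in Planck units; both are traceless, so $V(k,t)\in SU(2)$. *)

From Stdlib Require Import Reals Factorial.
From Coquelicot Require Import Coquelicot.
Open Scope R_scope.

Record M2 := mkM2 { e11 : C; e12 : C; e21 : C; e22 : C }.

Definition M2id : M2 := mkM2 (RtoC 1) (RtoC 0) (RtoC 0) (RtoC 1).
Definition M2add (A B : M2) : M2 :=
  mkM2 (Cplus (e11 A) (e11 B)) (Cplus (e12 A) (e12 B))
       (Cplus (e21 A) (e21 B)) (Cplus (e22 A) (e22 B)).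
Definition M2scale (s : C) (A : M2) : M2 :=
  mkM2 (Cmult s (e11 A)) (Cmult s (e12 A)) (Cmult s (e21 A)) (Cmult s (e22 A)).
Definition M2sub (A B : M2) : M2 := M2add A (M2scale (RtoC (-1)) B).
Definition M2mul (A B : M2) : M2 :=
  mkM2 (Cplus (Cmult (e11 A) (e11 B)) (Cmult (e12 A) (e21 B)))
       (Cplus (Cmult (e11 A) (e12 B)) (Cmult (e12 A) (e22 B)))
       (Cplus (Cmult (e21 A) (e11 B)) (Cmult (e22 A) (e21 B)))
       (Cplus (Cmult (e21 A) (e12 B)) (Cmult (e22 A) (e22 B))).
Definition M2adj (A : M2) : M2 :=
  mkM2 (Cconj (e11 A)) (Cconj (e21 A)) (Cconj (e12 A)) (Cconj (e22 A)).
Definition M2det (A : M2) : C :=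
  Cminus (Cmult (e11 A) (e22 A)) (Cmult (e12 A) (e21 A)).
Fixpoint M2pow (A : M2) (k : nat) : M2 :=
  match k with O => M2id | S k' => M2mul A (M2pow A k') end.

Definition Cseries_exp (z : nat -> C) : C :=
  (Series (fun k => fst (z k) / INR (Factorial.fact k)), Series (fun k => snd (z k) / INR (Factorial.fact k))).

Definition M2exp (A : M2) : M2 :=
  mkM2 (Cseries_exp (fun k => e11 (M2pow A k))) (Cseries_exp (fun k => e12 (M2pow A k)))
       (Cseries_exp (fun k => e21 (M2pow A k))) (Cseries_exp (fun k => e22 (M2pow A k))).

Definition Ci : C := (0, 1).
Definition cexpi (x : R) : C := (cos x, sin x).

Definition nn (m : R) : R := sqrt (1 - m ^ 2).
Definition omega (k m : R) : R := acos (nn m * cos k).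
Definition omegaD (k m : R) : R := sqrt (k ^ 2 + m ^ 2).
Definition vel (k m : R) : R := nn m * sin k / sin (omega k m).
Definition velD (k m : R) : R := k / sqrt (k ^ 2 + m ^ 2).
Definition alpha (k m : R) : R := omegaD k m - omega k m.
Definition beta (k m : R) : R :=
  1 - vel k m * velD k m - sqrt ((1 - vel k m ^ 2) * (1 - velD k m ^ 2)).

Definition Hqca (k m : R) : M2 :=
  M2scale (RtoC (omega k m / sin (omega k m)))
    (mkM2 (RtoC (- (nn m * sin k))) (RtoC m) (RtoC m) (RtoC (nn m * sin k))).
Definition HDirac (k m : R) : M2 :=
  mkM2 (RtoC (- k)) (RtoC m) (RtoC m) (RtoC k).

Definition Vmat (k m t : R) : M2 :=
  M2mul (M2exp (M2scale (Cmult (RtoC (- t)) Ci) (HDirac k m)))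
        (M2adj (M2exp (M2scale (Cmult (RtoC (- t)) Ci) (Hqca k m)))).

Definition is_eigenvalue (A : M2) (z : C) : Prop :=
  M2det (M2sub A (M2scale z M2id)) = RtoC 0.

Definition is_max_on (F : R -> R) (a b M : R) : Prop :=
  (exists k0, a <= k0 <= b /\ F k0 = M) /\ (forall k, a <= k <= b -> F k <= M).

Definition f_bound (abar bbar : R) (N : nat) : R :=
  acos (cos (PI / (2 * INR N)) + bbar) / abar.
Definition g_bound (abar bbar : R) (N : nat) (t : R) : R :=
  INR N * acos (cos (abar * t) - bbar).

From Stdlib Require Import Reals Factorial Lra Lia.
From Coquelicot Require Import Coquelicot.
Open Scope R_scope.

(* Both Hamiltonians have the form A(a, b) = [[-a, b], [b, a]], and A(a, b)² = (a² + b²) I, so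
   e^{-i A t} = cos (w t) I - i (sin (w t) / w) A with w = sqrt (a² + b²).  Hence V(k, t) is an
   SU(2) matrix whose half-trace, i.e. cos μ, equals
     cos (ω_D t) cos (ω t) + (1 - β) sin (ω_D t) sin (ω t),
   1 - β being the cosine of the angle between (k, m) and the coefficient vector of H.  As
   cos x cos y + g sin x sin y >= cos (x - y) - |1 - g|, we get cos μ >= cos (α t) - |β|
   >= cos (ᾱ t) - β̄ when ᾱ t <= π, and the bound on t makes this at least cos (π / 2N);
   monotonicity of arccos then gives N μ <= g <= π / 2. *)

Definition Hsym (a b : R) : M2 := mkM2 (RtoC (- a)) (RtoC b) (RtoC b) (RtoC a).

Definition evol_gen (a b t : R) : M2 := M2scale (Cmult (RtoC (- t)) Ci) (Hsym a b).

(* [su2 C S a b] is [C * I - i S * Hsym a b]. *)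
Definition su2 (C S a b : R) : M2 :=
  mkM2 (C, a * S) (0, - b * S) (0, - b * S) (C, - a * S).

(* The power series of [cos] and [sin] in [x²]:
   [cos x = cos_ser x²] and [sin x = x * sinc_ser x²]. *)
Definition cos_ser (y : R) : R := let (l, _) := exist_cos y in l.
Definition sinc_ser (y : R) : R := let (l, _) := exist_sin y in l.

(* [sin (w t) / w], with the continuous value [t] at [w = 0]. *)
Definition sin_div (w t : R) : R := t * sinc_ser ((w * t)²).

Lemma is_series_cos_ser y : is_series (fun n => cos_n n * y ^ n) (cos_ser y).
Proof. unfold cos_ser; destruct (exist_cos y) as [l H]; apply is_series_Reals, H. Qed.

Lemma is_series_sinc_ser y : is_series (fun n => sin_n n * y ^ n) (sinc_ser y).
Proof. unfold sinc_ser; destruct (exist_sin y) as [l H]; apply is_series_Reals, H. Qed.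

Lemma sin_div_spec w t : w * sin_div w t = sin (w * t).
Proof.
  unfold sin_div, sin, sinc_ser; destruct (exist_sin (w * t)²); ring.
Qed.

Lemma cos_sq_add_sin_div_sq r t :
  0 <= r -> cos (sqrt r * t) ^ 2 + r * sin_div (sqrt r) t ^ 2 = 1.
Proof.
  intro Hr; rewrite <- (pow2_sqrt r Hr) at 2.
  replace (sqrt r ^ 2 * sin_div (sqrt r) t ^ 2) with ((sqrt r * sin_div (sqrt r) t) ^ 2) by ring.
  rewrite sin_div_spec, <- (sin2_cos2 (sqrt r * t)); unfold Rsqr; ring.
Qed.

Lemma is_series_even_odd (u : nat -> R) l1 l2 :
  is_series (fun n => u (2 * n)%nat) l1 -> is_series (fun n => u (2 * n + 1)%nat) l2 ->
  is_series u (l1 + l2).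
Proof.
  assert (Hp : forall (v : nat -> R) l, is_series v l <-> is_pseries v 1 l).
  { intros v l; unfold is_pseries; split; apply is_series_ext; intro n;
      rewrite pow_n_pow, pow1; unfold scal; simpl; unfold mult; simpl; ring. }
  intros H1 H2; apply Hp; replace (l1 + l2) with (l1 + 1 * l2) by ring.
  apply is_pseries_odd_even; replace (1 ^ 2) with 1 by ring; apply (proj1 (Hp _ _)); assumption.
Qed.

Lemma Series_cos_sin_split (u : nat -> R) y c d :
  (forall n, u (2 * n)%nat = c * ((-1) ^ n * y ^ n) / INR (fact (2 * n))) ->
  (forall n, u (2 * n + 1)%nat = d * ((-1) ^ n * y ^ n) / INR (fact (2 * n + 1))) ->
  Series u = c * cos_ser y + d * sinc_ser y.
Proof.
  intros Heven Hodd; apply is_series_unique, is_series_even_odd.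
  - eapply is_series_ext; [| apply (is_series_scal c _ _ (is_series_cos_ser y))].
    intro n; rewrite Heven; unfold cos_n, scal; simpl; unfold mult; simpl.
    field; apply not_0_INR, fact_neq_0.
  - eapply is_series_ext; [| apply (is_series_scal d _ _ (is_series_sinc_ser y))].
    intro n; rewrite Hodd; unfold sin_n, scal; simpl; unfold mult; simpl.
    field; apply not_0_INR, fact_neq_0.
Qed.

Section Exponential.

Variables a b t : R.

Let y := (a ^ 2 + b ^ 2) * t ^ 2.

Lemma M2pow_evol_gen_even j :
  M2pow (evol_gen a b t) (2 * j) = su2 ((-1) ^ j * y ^ j) 0 a b.
Proof.
  induction j as [| j IH].
  - simpl; unfold su2, M2id, RtoC; f_equal; f_equal; ring.
  - replace (2 * S j)%nat with (S (S (2 * j))) by lia; cbn [M2pow]; rewrite IH.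
    unfold y, su2, evol_gen, Hsym, Ci, M2mul, M2scale, Cmult, Cplus, RtoC; simpl.
    f_equal; f_equal; ring.
Qed.

Lemma M2pow_evol_gen_odd j :
  M2pow (evol_gen a b t) (2 * j + 1) = su2 0 (t * ((-1) ^ j * y ^ j)) a b.
Proof.
  replace (2 * j + 1)%nat with (S (2 * j)) by lia; cbn [M2pow]; rewrite M2pow_evol_gen_even.
  unfold su2, evol_gen, Hsym, Ci, M2mul, M2scale, Cmult, Cplus, RtoC; simpl.
  f_equal; f_equal; ring.
Qed.

Lemma Series_M2exp_coord (phi : M2 -> R) c d r :
  (forall C S, phi (su2 C S a b) = c * C + d * S) ->
  r = c * cos_ser y + d * (t * sinc_ser y) ->
  Series (fun k => phi (M2pow (evol_gen a b t) k) / INR (fact k)) = r.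
Proof.
  intros Hphi ->; rewrite (Series_cos_sin_split _ y c (d * t)); [ring | |];
    intro n; cbv beta; [rewrite M2pow_evol_gen_even | rewrite M2pow_evol_gen_odd];
    rewrite Hphi; field; apply not_0_INR, fact_neq_0.
Qed.

Lemma M2exp_evol_gen :
  M2exp (evol_gen a b t)
  = su2 (cos (sqrt (a ^ 2 + b ^ 2) * t)) (sin_div (sqrt (a ^ 2 + b ^ 2)) t) a b.
Proof.
  assert (Hy : (sqrt (a ^ 2 + b ^ 2) * t)² = y).
  { unfold Rsqr, y; rewrite <- (pow2_sqrt (a ^ 2 + b ^ 2)) at 3 by nra; ring. }
  unfold M2exp, Cseries_exp, su2, sin_div, cos; rewrite Hy; fold (cos_ser y); simpl.
  f_equal; f_equal;
    [ apply (Series_M2exp_coord (fun M => fst (e11 M)) 1 0)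
    | apply (Series_M2exp_coord (fun M => snd (e11 M)) 0 a)
    | apply (Series_M2exp_coord (fun M => fst (e12 M)) 0 0)
    | apply (Series_M2exp_coord (fun M => snd (e12 M)) 0 (- b))
    | apply (Series_M2exp_coord (fun M => fst (e21 M)) 0 0)
    | apply (Series_M2exp_coord (fun M => snd (e21 M)) 0 (- b))
    | apply (Series_M2exp_coord (fun M => fst (e22 M)) 1 0)
    | apply (Series_M2exp_coord (fun M => snd (e22 M)) 0 (- a)) ];
    try (intros; simpl; ring); ring.
Qed.

End Exponential.

(* The characteristic equation [z² - 2 T z + 1 = 0] of a determinant-one matrix with trace [2 T]
   has [e^{iμ}] as a root only if [e^{iμ} + e^{-iμ} = 2 T]. *)
Lemma cexpi_eigenvalue_cos (A : M2) T mu :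
  M2det A = RtoC 1 -> Cplus (e11 A) (e22 A) = RtoC (2 * T) ->
  is_eigenvalue A (cexpi mu) -> cos mu = T.
Proof.
  destruct A as [[p11 q11] [p12 q12] [p21 q21] [p22 q22]].
  unfold is_eigenvalue, M2det, M2sub, M2add, M2scale, M2id, cexpi, Cminus, Cplus, Cmult,
    Copp, RtoC; simpl.
  intros Hdet Htr Heig; injection Hdet as Hdr Hdi; injection Htr as Htr Hti;
    injection Heig as Her Hei.
  replace p22 with (2 * T - p11) in * by lra; replace q22 with (- q11) in * by lra.
  set (c := cos mu) in *; set (s := sin mu) in *.
  assert (Hre : c ^ 2 - s ^ 2 - 2 * T * c + 1 = 0) by nra.
  assert (Him : 2 * c * s - 2 * T * s = 0) by nra.
  pose proof (sin2_cos2 mu) as Hcs; unfold Rsqr in Hcs; fold c s in Hcs.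
  assert (Hct : c - T = (c - T) * (s * s + c * c)) by (rewrite Hcs; ring).
  nra.
Qed.

Lemma su2_mul_adj_eigenvalue_cos C1 S1 a1 b1 C2 S2 a2 b2 mu :
  C1 ^ 2 + (a1 ^ 2 + b1 ^ 2) * S1 ^ 2 = 1 -> C2 ^ 2 + (a2 ^ 2 + b2 ^ 2) * S2 ^ 2 = 1 ->
  is_eigenvalue (M2mul (su2 C1 S1 a1 b1) (M2adj (su2 C2 S2 a2 b2))) (cexpi mu) ->
  cos mu = C1 * C2 + (a1 * a2 + b1 * b2) * S1 * S2.
Proof.
  intros D1 D2; apply cexpi_eigenvalue_cos;
    unfold M2det, M2mul, M2adj, su2, Cminus, Cplus, Cmult, Copp, Cconj, RtoC; simpl;
    f_equal; try ring.
  rewrite <- (Rmult_1_l 1) at 1; rewrite <- D1 at 1; rewrite <- D2; ring.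
Qed.

Lemma evol_eigenvalue_cos a1 b1 a2 b2 t mu :
  is_eigenvalue (M2mul (M2exp (evol_gen a1 b1 t)) (M2adj (M2exp (evol_gen a2 b2 t))))
    (cexpi mu) ->
  cos mu = cos (sqrt (a1 ^ 2 + b1 ^ 2) * t) * cos (sqrt (a2 ^ 2 + b2 ^ 2) * t)
           + (a1 * a2 + b1 * b2) * sin_div (sqrt (a1 ^ 2 + b1 ^ 2)) t
                                 * sin_div (sqrt (a2 ^ 2 + b2 ^ 2)) t.
Proof.
  rewrite !M2exp_evol_gen; apply su2_mul_adj_eigenvalue_cos;
    apply cos_sq_add_sin_div_sq; nra.
Qed.

Definition qca_a (k m : R) : R := omega k m / sin (omega k m) * (nn m * sin k).
Definition qca_b (k m : R) : R := omega k m / sin (omega k m) * m.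

Lemma Vmat_evol k m t :
  Vmat k m t = M2mul (M2exp (evol_gen k m t))
                     (M2adj (M2exp (evol_gen (qca_a k m) (qca_b k m) t))).
Proof.
  unfold Vmat; replace (Hqca k m) with (Hsym (qca_a k m) (qca_b k m)); [reflexivity |].
  unfold Hqca, Hsym, qca_a, qca_b, M2scale, Cmult, RtoC; simpl; f_equal; f_equal; ring.
Qed.

Lemma omega_0_0 : omega 0 0 = 0.
Proof.
  unfold omega, nn; replace (1 - 0 ^ 2) with 1 by ring.
  rewrite sqrt_1, cos_0, Rmult_1_l; apply acos_1.
Qed.

Lemma sin_eq_0_lt_PI k : - PI < k < PI -> sin k = 0 -> k = 0.
Proof.
  intros Hk Hs; destruct (Rtotal_order k 0) as [Hl | [He | Hg]]; [| exact He |].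
  - assert (0 < sin (- k)) by (apply sin_gt_0; lra); rewrite sin_neg in *; lra.
  - assert (0 < sin k) by (apply sin_gt_0; lra); lra.
Qed.

Lemma cos_mul_add_sin_mul_ge x y g :
  cos (x - y) - Rabs (1 - g) <= cos x * cos y + g * (sin x * sin y).
Proof.
  rewrite cos_minus.
  assert (Hxy : Rabs (sin x * sin y) <= 1).
  { pose proof (SIN_bound x) as Hx; pose proof (SIN_bound y) as Hy.
    apply Rabs_le in Hx; apply Rabs_le in Hy.
    rewrite Rabs_mult, <- (Rmult_1_l 1); apply Rmult_le_compat; auto using Rabs_pos. }
  assert (Hprod : (1 - g) * (sin x * sin y) <= Rabs (1 - g)).
  { apply Rle_trans with (Rabs ((1 - g) * (sin x * sin y))); [apply RRle_abs |].
    rewrite Rabs_mult.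
    apply (Rmult_le_compat_l (Rabs (1 - g))) in Hxy; [lra | apply Rabs_pos]. }
  lra.
Qed.

Section QCA.

Variables k m : R.
Hypothesis Hm : 0 <= m <= 1.
Hypothesis Hk : - PI < k < PI.

Lemma nn_sq : nn m ^ 2 = 1 - m ^ 2.
Proof. apply pow2_sqrt; nra. Qed.

Lemma sin_omega_sq : sin (omega k m) ^ 2 = nn m ^ 2 * sin k ^ 2 + m ^ 2.
Proof.
  pose proof nn_sq as Hn2; pose proof (COS_bound k) as Hc; pose proof (sin2_cos2 k) as Hsc.
  assert (Hx : -1 <= nn m * cos k <= 1) by (unfold Rsqr in Hsc; split; nra).
  unfold omega; rewrite sin_acos, pow2_sqrt by (auto; unfold Rsqr; nra).
  replace (sin k ^ 2) with (1 - (cos k)²) by (rewrite <- Hsc; unfold Rsqr; ring).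
  unfold Rsqr; replace (nn m * cos k * (nn m * cos k)) with (nn m ^ 2 * cos k ^ 2) by ring.
  rewrite Hn2; ring.
Qed.

Lemma sin_omega_pos : 0 < k ^ 2 + m ^ 2 -> 0 < sin (omega k m).
Proof.
  intro Hkm.
  assert (Hs0 : 0 <= sin (omega k m)) by (apply sin_ge_0; apply acos_bound).
  destruct (Req_dec (sin (omega k m)) 0) as [Hs | Hs]; [exfalso | lra].
  pose proof sin_omega_sq as Hs2; rewrite Hs, nn_sq in Hs2.
  assert (Hsk : 0 <= (1 - m ^ 2) * sin k ^ 2) by (apply Rmult_le_pos; nra).
  assert (Hm0 : m = 0) by nra; rewrite Hm0 in Hs2, Hkm.
  assert (Hk0 : k = 0) by (apply sin_eq_0_lt_PI; [exact Hk | nra]).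
  rewrite Hk0 in Hkm; lra.
Qed.

Lemma qca_norm : sqrt (qca_a k m ^ 2 + qca_b k m ^ 2) = omega k m.
Proof.
  pose proof (acos_bound (nn m * cos k)) as Hom; fold (omega k m) in Hom.
  destruct (Req_dec (k ^ 2 + m ^ 2) 0) as [H0 | H0].
  - assert (k = 0 /\ m = 0) as [-> ->] by (split; nra).
    unfold qca_a, qca_b; rewrite omega_0_0; unfold Rdiv;
      rewrite !Rmult_0_l, pow_i, Rplus_0_l, sqrt_0 by lia; reflexivity.
  - pose proof (sin_omega_pos ltac:(nra)) as Hs.
    replace (qca_a k m ^ 2 + qca_b k m ^ 2) with (omega k m ^ 2).
    + apply sqrt_pow2; lra.
    + unfold qca_a, qca_b.
      replace ((omega k m / sin (omega k m) * (nn m * sin k)) ^ 2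
               + (omega k m / sin (omega k m) * m) ^ 2)
        with ((omega k m / sin (omega k m)) ^ 2 * (nn m ^ 2 * sin k ^ 2 + m ^ 2)) by ring.
      rewrite <- sin_omega_sq; field; lra.
Qed.

Lemma one_sub_beta :
  0 < k ^ 2 + m ^ 2 ->
  1 - beta k m = (nn m * k * sin k + m ^ 2) / (omegaD k m * sin (omega k m)).
Proof.
  intro Hkm; pose proof (sin_omega_pos Hkm) as Hs; pose proof sin_omega_sq as Hs2.
  assert (Hw : 0 < omegaD k m) by (apply sqrt_lt_R0; lra).
  assert (Hw2 : omegaD k m ^ 2 = k ^ 2 + m ^ 2) by (apply pow2_sqrt; lra).
  unfold beta, vel, velD; fold (omegaD k m).
  set (s := sin (omega k m)) in *; set (w := omegaD k m) in *; set (n := nn m) in *.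
  assert (E1 : 1 - (n * sin k / s) ^ 2 = m ^ 2 / s ^ 2).
  { replace (m ^ 2) with (s ^ 2 - (n * sin k) ^ 2) by (rewrite Hs2; ring); field; lra. }
  assert (E2 : 1 - (k / w) ^ 2 = m ^ 2 / w ^ 2).
  { replace (m ^ 2) with (w ^ 2 - k ^ 2) by (rewrite Hw2; ring); field; lra. }
  rewrite E1, E2.
  replace (m ^ 2 / s ^ 2 * (m ^ 2 / w ^ 2)) with ((m ^ 2 / (w * s)) ^ 2) by (field; lra).
  rewrite sqrt_pow2; [field; lra |].
  apply Rmult_le_pos; [nra | apply Rlt_le, Rinv_0_lt_compat; nra].
Qed.

Lemma qca_dot : k * qca_a k m + m * qca_b k m = (1 - beta k m) * omegaD k m * omega k m.
Proof.
  destruct (Req_dec (k ^ 2 + m ^ 2) 0) as [H0 | H0].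
  - assert (k = 0 /\ m = 0) as [-> ->] by (split; nra).
    rewrite omega_0_0; ring.
  - pose proof (sin_omega_pos ltac:(nra)) as Hs.
    assert (Hw : 0 < omegaD k m) by (apply sqrt_lt_R0; nra).
    rewrite one_sub_beta by nra; unfold qca_a, qca_b; field; lra.
Qed.

Lemma cos_alpha_sub_beta_le t mu :
  is_eigenvalue (Vmat k m t) (cexpi mu) -> cos (alpha k m * t) - Rabs (beta k m) <= cos mu.
Proof.
  rewrite Vmat_evol; intro Heig; apply evol_eigenvalue_cos in Heig.
  rewrite qca_norm, qca_dot in Heig; fold (omegaD k m) in Heig.
  replace ((1 - beta k m) * omegaD k m * omega k m * sin_div (omegaD k m) t
           * sin_div (omega k m) t)
    with ((1 - beta k m) * (sin (omegaD k m * t) * sin (omega k m * t))) in Heig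
    by (rewrite <- !sin_div_spec; ring).
  rewrite Heig; unfold alpha; rewrite Rmult_minus_distr_r.
  replace (Rabs (beta k m)) with (Rabs (1 - (1 - beta k m))) by (f_equal; ring).
  apply cos_mul_add_sin_mul_ge.
Qed.

End QCA.

Lemma le_acos x y : 0 <= x <= PI -> -1 <= y <= 1 -> y <= cos x -> x <= acos y.
Proof.
  intros Hx Hy Hc; pose proof (acos_bound y).
  apply cos_decr_0; try lra; rewrite cos_acos; assumption.
Qed.

Lemma acos_le x y : 0 <= x <= PI -> -1 <= y <= 1 -> cos x <= y -> acos y <= x.
Proof.
  intros Hx Hy Hc; pose proof (acos_bound y).
  apply cos_decr_0; try lra; rewrite cos_acos; assumption.
Qed.

Lemma cos_mul_le_of_Rabs_le a abar t :
  Rabs a <= abar -> 0 <= t -> abar * t <= PI -> cos (abar * t) <= cos (a * t).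
Proof.
  intros Ha Ht Hat.
  assert (Habs : cos (a * t) = cos (Rabs a * t)).
  { destruct (Rcase_abs a).
    - rewrite Rabs_left, <- cos_neg by lra; f_equal; ring.
    - rewrite Rabs_right by lra; reflexivity. }
  pose proof (Rabs_pos a).
  assert (Hle : Rabs a * t <= abar * t) by (apply Rmult_le_compat_r; lra).
  rewrite Habs; apply cos_decr_1; try lra; apply Rmult_le_pos; lra.
Qed.

Lemma PI_div_2N_bounds N : (0 < N)%nat -> 0 < PI / (2 * INR N) <= PI / 2.
Proof.
  intro HN; assert (HN1 : 1 <= INR N) by (apply (le_INR 1); lia).
  pose proof PI_RGT_0; split; [apply Rdiv_lt_0_compat; lra |].
  apply (Rmult_le_reg_r (2 * INR N)); [lra |]; field_simplify; [nra | lra].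
Qed.

(* For [abar = 0] the bound [f_bound] is [0] (division by zero), so [t = 0]. *)
Lemma cos_ge_of_le_f_bound abar bbar N t :
  0 <= abar -> -1 <= cos (PI / (2 * INR N)) + bbar <= 1 -> 0 <= t <= f_bound abar bbar N ->
  cos (PI / (2 * INR N)) + bbar <= cos (abar * t) /\ abar * t <= PI.
Proof.
  intros Ha Hp [Ht0 Ht]; unfold f_bound in Ht.
  set (p := cos (PI / (2 * INR N)) + bbar) in *.
  assert (Hat : abar * t <= acos p).
  { destruct (Req_dec abar 0) as [-> | Ha0]; [rewrite Rmult_0_l; apply acos_bound |].
    apply (Rmult_le_compat_l abar) in Ht; [| lra].
    replace (abar * (acos p / abar)) with (acos p) in Ht by (field; lra); exact Ht. }
  pose proof (acos_bound p); split; [| lra].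
  rewrite <- (cos_acos p Hp) at 1; apply cos_decr_1; nra.
Qed.

Theorem lemma3 (m kbar : R) (N : nat) (abar bbar t : R) :
  0 <= m <= 1 ->
  0 <= kbar < PI ->
  (0 < N)%nat ->
  is_max_on (fun k => Rabs (alpha k m)) (- kbar) kbar abar ->
  is_max_on (fun k => Rabs (beta k m)) (- kbar) kbar bbar ->
  bbar <= 1 - cos (PI / (2 * INR N)) ->
  0 <= t <= f_bound abar bbar N ->
  forall k : R, - kbar <= k <= kbar ->
  forall mu : R, 0 <= mu <= PI ->
  is_eigenvalue (Vmat k m t) (cexpi mu) ->
  is_eigenvalue (Vmat k m t) (cexpi (- mu)) ->
  INR N * mu <= g_bound abar bbar N t /\ g_bound abar bbar N t <= PI / 2.
Proof.
  intros Hm Hkbar HN [[ka [_ Ea]] Ma] [[kb [_ Eb]] Mb] Hbb Ht k Hk mu Hmu Heig _.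
  assert (Ha0 : 0 <= abar) by (rewrite <- Ea; apply Rabs_pos).
  assert (Hb0 : 0 <= bbar) by (rewrite <- Eb; apply Rabs_pos).
  pose proof (PI_div_2N_bounds N HN) as Hth; set (th := PI / (2 * INR N)) in *.
  assert (Hcth : 0 <= cos th) by (apply cos_ge_0; lra).
  assert (Hp : -1 <= cos th + bbar <= 1) by lra.
  destruct (cos_ge_of_le_f_bound abar bbar N t Ha0 Hp Ht) as [Hq Hat]; fold th in Hq.
  set (q := cos (abar * t) - bbar).
  assert (Hq1 : -1 <= q <= 1) by (pose proof (COS_bound (abar * t)); unfold q; lra).
  unfold g_bound; fold th q; split.
  - apply Rmult_le_compat_l; [apply pos_INR |]; apply le_acos; [lra | exact Hq1 |].
    pose proof (cos_mul_le_of_Rabs_le (alpha k m) abar t (Ma k Hk) (proj1 Ht) Hat).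
    pose proof (cos_alpha_sub_beta_le k m Hm ltac:(lra) t mu Heig).
    pose proof (Mb k Hk); simpl in *; unfold q; lra.
  - apply Rle_trans with (INR N * th).
    + apply Rmult_le_compat_l; [apply pos_INR |].
      apply acos_le; [lra | exact Hq1 | unfold q; lra].
    + unfold th; right; field; apply not_0_INR; lia.
Qed.
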